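(* Let $X_n(d_1,\dots,d_r)\subset\mathbb{C}P^{n+r}$ be a complete intersection with $r>1$, $d_1,\dots,d_r>1$ and $c_1=n+r+1-\sum_{i=1}^r d_i<0$. For $1\leqslant j\leqslant r$ set $c_1^{(n,\hat j)}=n+(r-1)+1-\sum_{i=1}^r d_i+d_j$. If $c_1^{(n,\hat j)}\geqslant 0$ for every $1\leqslant j\leqslant r$, then $(-1)^n{\rm Td}(X_n(d_1,\dots,d_r))\geqslant n+r$.
   Context: A complete intersection $X_n(d_1,\dots,d_r)\subset\mathbb{C}P^{n+r}$ is a compact complex $n$-dimensional manifold given as the transversal intersection of $r$ nonsingular hypersurfaces of degrees $d_1,\dots,d_r$. The Todd genus of a compact complex $n$-manifold $M$ with formal Chern roots $x_1,\dots,x_n$ is ${\rm Td}(M)=\big(\prod_i\frac{x_i}{1-e^{-x_i}}\big)[M]$. *)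

From mathcomp Require Import all_boot all_order all_algebra.
Unset Printing Implicit Defensive.
Import Order.TTheory GRing.Theory Num.Theory.
Local Open Scope ring_scope.

(* Truncation to degree <= n of the power series (1 - e^{-a x}) / x
   = sum_{k>=0} -(-a)^(k+1) x^k / (k+1)! . *)
Definition gser (a : rat) (n : nat) : {poly rat} :=
  \poly_(k < n.+1) (- (- a) ^+ k.+1 / (k.+1)`!%:R).

(* Truncation (exact up to degree n) of the Todd power series
   x / (1 - e^{-x}) = 1 / gser 1 = sum_k (1 - gser 1)^k. *)
Definition toddser (n : nat) : {poly rat} :=
  \sum_(k < n.+1) (1 - gser 1 n) ^+ k.

(* With x the hyperplane class, TX (+) N = TCP^{n+r}|_X, whose Chern roots are
   x (n+r+1 times), and N has Chern roots d_i x.  Hence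
     Td(TX) = (x/(1-e^{-x}))^{n+r+1} * prod_i (1-e^{-d_i x})/(d_i x),
   and evaluation on [X] of a class p(x) is (prod_i d_i) * [x^n] p. *)
Definition Todd_CI (n r : nat) (d : 'I_r -> nat) : rat :=
  (\prod_(i < r) (d i)%:R) *
  (toddser n ^+ (n + r + 1) *
   \prod_(i < r) ((d i)%:R^-1 *: gser (d i)%:R n))`_n.

Definition c1_CI (n r : nat) (d : 'I_r -> nat) : int :=
  (n + r + 1)%:Z - (\sum_(i < r) d i)%:Z.

Definition c1_hat (n r : nat) (d : 'I_r -> nat) (j : 'I_r) : int :=
  (n + (r - 1) + 1)%:Z - (\sum_(i < r) d i)%:Z + (d j)%:Z.

(* With x the hyperplane class, T = x / (1 - e^{-x}) and E = e^{-x}, the Todd genus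
   of X = X_n(d_1, ..., d_r) is [x^N] T^(N+1) prod_i (1 - E^(d_i)) with N = n + r.
   Expanding the product over subsets J of {1..r} leaves the numbers
   [x^j] T^(j+1) E^m, which the substitution y = 1 - E turns into
   [y^j] (1 - y)^(m-1) = (-1)^j C(m-1, j) for m > 0 (and 1 for m = 0); here they are
   computed instead from T (1 - E) = x and x T' = T - T^2 E.  Since c_1^{(n,j)} >= 0,
   every proper nonempty J has sum_(i in J) d_i <= N, so only J = {} and J = {1..r}
   contribute: Td(X) = 1 + (-1)^n C(S-1, N) with S = sum_i d_i.  Finally c_1 < 0
   means S - 1 > N, so C(S-1, N) >= N + 1. *)

From mathcomp Require Import all_boot all_order all_algebra.
From mathcomp Require Import ring zify lra.
Import Order.TTheory GRing.Theory Num.Theory.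
Set Implicit Arguments.
Unset Strict Implicit.
Unset Printing Implicit Defensive.

Local Open Scope ring_scope.

Local Notation "p = q %[modX m ]" := (p %% 'X^m = q %% 'X^m)
  (at level 70, q at next level, format "p  =  q  %[modX  m ]") : ring_scope.

Section Congruence.

Variable R : fieldType.
Implicit Types (d p q : {poly R}).

Lemma modp_mul2 d p1 p2 q1 q2 :
  p1 %% d = p2 %% d -> q1 %% d = q2 %% d -> (p1 * q1) %% d = (p2 * q2) %% d.
Proof.
move=> Ep Eq; rewrite -modp_mul Eq modp_mul [p1 * q2]mulrC -[(q2 * p1) %% d]modp_mul Ep.
by rewrite modp_mul mulrC.
Qed.

Lemma modp_exp2 d p q k : p %% d = q %% d -> (p ^+ k) %% d = (q ^+ k) %% d.
Proof. by move=> E; elim: k => [|k IH]; rewrite // !exprS; apply: modp_mul2. Qed.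

Lemma modp_prod2 d (I : finType) (P : pred I) (F G : I -> {poly R}) :
  (forall i, F i %% d = G i %% d) ->
  (\prod_(i | P i) F i) %% d = (\prod_(i | P i) G i) %% d.
Proof. by move=> E; elim/big_rec2: _ => // i p q _; apply: modp_mul2. Qed.

Lemma modp_inv_uniq d a b g :
  (a * g) %% d = 1 %% d -> (b * g) %% d = 1 %% d -> a %% d = b %% d.
Proof.
move=> Ea Eb; rewrite -[a]mulr1 -modp_mul -Eb modp_mul mulrCA.
by rewrite -modp_mul Ea modp_mul mulr1.
Qed.

Lemma modXn_coefP m p q : p = q %[modX m] <-> forall i, (i < m)%N -> p`_i = q`_i.
Proof.
rewrite -!Pdiv.IdomainMonic.take_poly_modp; split=> [E i im | E].
  by have := congr1 (fun s : {poly R} => s`_i) E; rewrite !coef_take_poly im.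
by apply/polyP => i; rewrite !coef_take_poly; case: ifP => // /E.
Qed.

Lemma modXn_le k m p q : (k <= m)%N -> p = q %[modX m] -> p = q %[modX k].
Proof.
move=> km /modXn_coefP E; apply/modXn_coefP => i ik.
by apply: E; apply: leq_trans ik km.
Qed.

Lemma modXn_deriv m p q : p = q %[modX m.+1] -> p^`() = q^`() %[modX m].
Proof. by move/modXn_coefP=> E; apply/modXn_coefP => i im; rewrite !coef_deriv E. Qed.

Lemma modXn_mulX m p q : p = q %[modX m] -> 'X * p = 'X * q %[modX m.+1].
Proof.
by move/modXn_coefP=> E; apply/modXn_coefP => -[|i] im; rewrite !coefXM // E.
Qed.

Lemma modXn_exp_coef0 k p : p`_0 = 0 -> p ^+ k = 0 %[modX k].
Proof.
move=> p0; rewrite mod0p; apply: modp_eq0; apply: dvdp_exp2r.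
by rewrite -['X]subr0 -polyC0 dvdp_XsubCl rootE horner_coef0 p0.
Qed.

End Congruence.

Lemma exp_ode_coef (R : numFieldType) (p : {poly R}) (c : R) m :
  (forall i, (i < m)%N -> p^`()`_i = c * p`_i) -> p`_0 = 1 ->
  forall i, (i <= m)%N -> p`_i = c ^+ i / i`!%:R.
Proof.
move=> Dp p0; elim=> [|i IH] im; first by rewrite p0 expr0 fact0 divr1.
have := Dp i im; rewrite coef_deriv (IH (ltnW im)) -[_ *+ i.+1]mulr_natr => Ei.
have -> : p`_i.+1 = c * (c ^+ i / i`!%:R) / i.+1%:R by rewrite -Ei mulfK ?pnatr_eq0.
by rewrite exprS factS natrM invfM !mulrA mulrAC.
Qed.

Section TruncatedSeries.

Implicit Types (a : rat) (n K : nat).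

Lemma coef_gser a n k :
  (gser a n)`_k = if (k < n.+1)%N then - (-a) ^+ k.+1 / k.+1`!%:R else 0.
Proof. exact: coef_poly. Qed.

Definition expser a K : {poly rat} := 1 - 'X * gser a K.

Lemma coef_expser a K i : (i <= K.+1)%N -> (expser a K)`_i = (-a) ^+ i / i`!%:R.
Proof.
case: i => [|i] iK; rewrite coefB coef1 coefXM /=.
  by rewrite subr0 expr0 fact0 divr1.
by rewrite coef_gser iK sub0r mulNr opprK.
Qed.

Lemma gser_modXn a n K : (n <= K)%N -> gser a n = gser a K %[modX n.+1].
Proof.
by move=> nK; apply/modXn_coefP => i ilt; rewrite !coef_gser ilt (leq_trans ilt).
Qed.

Lemma toddser_mul_gser K : toddser K * gser 1 K = 1 %[modX K.+1].
Proof.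
set h := 1 - gser 1 K.
have -> : toddser K * gser 1 K = 1 - h ^+ K.+1.
  by rewrite -[RHS]opprB subrX1 -mulNr opprB /h subKr mulrC.
have h0 : h`_0 = 0 by rewrite coefB coef1 coef_gser expr1 opprK divr1 subrr.
by rewrite modpD modpN modXn_exp_coef0 // mod0p subr0.
Qed.

Lemma toddser_modXn n K : (n <= K)%N -> toddser n = toddser K %[modX n.+1].
Proof.
move=> nK; apply: (modp_inv_uniq (toddser_mul_gser n)).
rewrite (modp_mul2 (erefl _) (gser_modXn 1 nK)).
by apply: modXn_le (toddser_mul_gser K).
Qed.

Lemma deriv_expser K : (expser 1 K)^`() = - expser 1 K %[modX K.+1].
Proof.
apply/modXn_coefP => i ilt; rewrite coef_deriv coefN !coef_expser ?(ltnW ilt) //.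
rewrite -[_ *+ i.+1]mulr_natr exprS factS natrM; field.
by rewrite nat1r !pnatr_eq0 -lt0n fact_gt0.
Qed.

Lemma expser_nat d K : expser d%:R K = expser 1 K ^+ d %[modX K.+2].
Proof.
set e := expser 1 K.
have De : forall i, (i < K.+1)%N -> (e ^+ d)^`()`_i = - d%:R * (e ^+ d)`_i.
  move=> i ilt; rewrite deriv_exp coefMn.
  have /modXn_coefP -> // :=
    modp_mul2 (deriv_expser K) (erefl ((e ^+ d.-1) %% 'X^(K.+1))).
  case: d => [|d]; first by rewrite mulr0n mulNr mul0r oppr0.
  by rewrite -/e /= !mulNr -exprS coefN mulr_natl mulNrn.
have e0 : (e ^+ d)`_0 = 1.
  rewrite -horner_coef0 horner_exp horner_coef0 coef_expser //.
  by rewrite expr0 fact0 divr1 expr1n.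
apply/modXn_coefP => i ilt.
by rewrite coef_expser // (exp_ode_coef De e0) // mulNr mul1r.
Qed.

End TruncatedSeries.

(* [y^j] (1 - y)^(m-1), where (1 - y)^(-1) = sum_k y^k for m = 0. *)
Definition powB_coef (j m : nat) : rat :=
  if m == 0%N then 1 else (-1) ^+ j * 'C(m.-1, j)%:R.

Section ToddCoefficients.

Variable K : nat.
Local Notation T := (toddser K).
Local Notation e := (expser 1 K).

Lemma toddser_mul_1subexp : T * (1 - e) = 'X %[modX K.+2].
Proof.
by move: (modXn_mulX (toddser_mul_gser K)); rewrite mulr1 /expser subKr mulrCA.
Qed.

(* Differentiate T (1 - e) = X, using e' = -e, and multiply by T. *)
Lemma toddser_ode : 'X * T^`() + T ^+ 2 * e = T %[modX K.+1].
Proof.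
have T1e := modXn_le (leqnSn _) toddser_mul_1subexp.
have D : T^`() * (1 - e) + T * e = 1 %[modX K.+1].
  have := modXn_deriv toddser_mul_1subexp.
  rewrite derivX derivM derivB -polyC1 derivC sub0r polyC1 => <-.
  rewrite !modpD; congr (_ + _); apply: modp_mul2 => //.
  by rewrite modpN deriv_expser modpN opprK.
transitivity ((T * (T^`() * (1 - e) + T * e)) %% 'X^(K.+1)); last first.
  by rewrite (modp_mul2 (erefl _) D) mulr1.
rewrite (mulrDr T) (mulrCA T) (mulrA T) -expr2 !modpD; congr (_ + _).
by rewrite (modp_mul2 (erefl (T^`() %% _)) T1e) mulrC.
Qed.

Definition todd_coef j m := (T ^+ j.+1 * e ^+ m)`_j.

Lemma todd_coef0 m : todd_coef 0 m = 1.
Proof.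
have T0 : T`_0 = 1.
  have /modXn_coefP/(_ 0%N erefl) := toddser_mul_gser K.
  by rewrite coef0M coef_gser /= expr1 opprK divr1 coef1.
rewrite /todd_coef -horner_coef0 hornerM !horner_exp !horner_coef0 T0.
by rewrite coef_expser // expr0 fact0 divr1 !expr1n mulr1.
Qed.

Lemma todd_coef_rec j m :
  (j < K)%N -> todd_coef j.+1 m - todd_coef j.+1 m.+1 = todd_coef j m.
Proof.
move=> jK; rewrite /todd_coef -coefB.
have -> : T ^+ j.+2 * e ^+ m - T ^+ j.+2 * e ^+ m.+1
        = (T ^+ j.+1 * e ^+ m) * (T * (1 - e)) by rewrite !exprS; ring.
have /modXn_coefP -> := modp_mul2 (erefl ((T ^+ j.+1 * e ^+ m) %% 'X^(K.+2)))
                          toddser_mul_1subexp.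
  by rewrite coefMX.
by rewrite ltnS ltnW.
Qed.

(* Coefficient j of X (T^j)' is j times that of T^j; by toddser_ode it is also
   that value minus j * todd_coef j 1. *)
Lemma todd_coef1 j : (0 < j <= K)%N -> todd_coef j 1 = 0.
Proof.
case: j => [//|j] /= jK.
have /modXn_coefP/(_ j.+1 jK) :=
  modp_mul2 (erefl ((T ^+ j) %% 'X^(K.+1))) toddser_ode.
rewrite mulrDr coefD mulrCA coefXM /= mulrA -exprD addn2 -exprSr => Ecoef.
have Ederiv : (T ^+ j * T^`())`_j *+ j.+1 = (T ^+ j.+1)`_j.+1 *+ j.+1.
  by rewrite -coefMn -coef_deriv deriv_exp mulrC.
suff : todd_coef j.+1 1 *+ j.+1 == 0 by rewrite mulrn_eq0 => /eqP.
have -> : todd_coef j.+1 1 = (T ^+ j.+1)`_j.+1 - (T ^+ j * T^`())`_j.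
  by rewrite /todd_coef expr1 -Ecoef (addrC (T ^+ j * T^`())`_j) addrK.
by rewrite mulrnBl Ederiv subrr.
Qed.

Lemma todd_coefE j m : (j <= K)%N -> todd_coef j m = powB_coef j m.
Proof.
elim: j m => [|j IH] m jK.
  by rewrite todd_coef0 /powB_coef; case: m => // m; rewrite expr0 mul1r bin0.
case: m => [|m].
  rewrite -(subrK (todd_coef j.+1 1) (todd_coef j.+1 0)) todd_coef_rec //.
  by rewrite todd_coef1 // addr0 IH ?(ltnW jK).
elim: m => [|m IHm]; first by rewrite todd_coef1 // /powB_coef /= bin0n mulr0.
rewrite -[todd_coef j.+1 m.+2](subKr (todd_coef j.+1 m.+1)) todd_coef_rec //.
by rewrite IHm IH ?(ltnW jK) // /powB_coef /= binS natrD exprS; ring.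
Qed.

End ToddCoefficients.

Lemma prod_1subXn_expand (R : comPzRingType) (I : finType) (d : I -> nat) (x : R) :
  \prod_i (1 - x ^+ d i) = \sum_(J : {set I}) (-1) ^+ #|J| * x ^+ (\sum_(i in J) d i).
Proof.
under eq_bigr do rewrite addrC.
rewrite bigA_distr; apply: eq_bigr => J _.
by rewrite -big_mkcond /= prodrN prodrXr.
Qed.

Lemma leq_sum_notin (I : finType) (d : I -> nat) (J : {set I}) j :
  j \notin J -> (\sum_(i in J) d i + d j <= \sum_i d i)%N.
Proof.
move=> jJ; rewrite addnC -big_setU1 //= big_mkcond leq_sum // => i _.
by case: ifP.
Qed.

Lemma powB_coef_small j m : (0 < m <= j)%N -> powB_coef j m = 0.
Proof. by case: m => [//|m] /= mj; rewrite /powB_coef /= bin_small ?mulr0. Qed.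

Lemma sum_powB_coef (I : finType) (d : I -> nat) N :
    (0 < #|I|)%N -> (forall i, 0 < d i)%N -> (forall j, \sum_i d i <= N + d j)%N ->
  \sum_(J : {set I}) (-1) ^+ #|J| * powB_coef N (\sum_(i in J) d i)
    = 1 + (-1) ^+ #|I| * powB_coef N (\sum_i d i).
Proof.
move=> I0 d0 dS; have T0 : [set: I] != set0 by rewrite -card_gt0 cardsT.
rewrite (bigD1 set0) //= (bigD1 setT) //= big_set0.
rewrite [\sum_(J | _ && _) _]big1 ?addr0; last first.
  move=> J /andP[J0 JT]; rewrite powB_coef_small ?mulr0 //.
  have /set0Pn[i iJ] := J0.
  have /subsetPn[j _ jJ] : ~~ ([set: I] \subset J) by rewrite subTset.
  apply/andP; split; first by rewrite (bigD1 i) //= addn_gt0 d0.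
  by rewrite -(leq_add2r (d j)) (leq_trans (leq_sum_notin d jJ)).
rewrite cards0 expr0 mul1r cardsT; congr (_ + _ * powB_coef _ _).
by apply: eq_bigl => i; rewrite inE.
Qed.

Lemma Todd_CI_expser n r (d : 'I_r -> nat) :
  (forall i, 0 < d i)%N ->
  Todd_CI n r d =
    (toddser (n + r) ^+ (n + r).+1 * \prod_i (1 - expser 1 (n + r) ^+ d i))`_(n + r).
Proof.
move=> d0; set N := (n + r)%N; have nN : (n <= N)%N := leq_addr r n.
have d_neq0 : \prod_i ((d i)%:R : rat) != 0.
  by apply/prodf_neq0 => i _; rewrite pnatr_eq0 -lt0n.
rewrite /Todd_CI scaler_prod -scalerAr coefZ mulrA prodfV mulfV // mul1r addn1.
have /modXn_coefP -> // := modp_mul2 (modp_exp2 N.+1 (toddser_modXn nN))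
  (modp_prod2 predT (fun i => gser_modXn (d i)%:R nN)).
have Eprod : 'X^r * \prod_i gser (d i)%:R N = \prod_i (1 - expser (d i)%:R N).
  rewrite /expser; under [RHS]eq_bigr do rewrite subKr.
  by rewrite big_split prodr_const card_ord.
have Eexp i : 1 - expser (d i)%:R N = 1 - expser 1 N ^+ d i %[modX N.+1].
  by rewrite !modpD !modpN (modXn_le (leqnSn _) (expser_nat _ _)).
transitivity (('X^r * (toddser N ^+ N.+1 * \prod_i gser (d i)%:R N))`_N).
  by rewrite coefXnM ltnNge leq_addl /= addnK.
rewrite mulrCA Eprod.
by have /modXn_coefP -> // := modp_mul2 (erefl ((toddser N ^+ N.+1) %% 'X^(N.+1)))
  (modp_prod2 predT Eexp).
Qed.

Lemma Todd_CI_closed_form n r (d : 'I_r -> nat) :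
    (0 < r)%N -> (forall i, 0 < d i)%N -> (forall j, \sum_i d i <= n + r + d j)%N ->
  Todd_CI n r d = 1 + (-1) ^+ n * 'C((\sum_i d i).-1, n + r)%:R.
Proof.
move=> r0 d0 dS; set N := (n + r)%N.
have Eterm (J : {set 'I_r}) :
    (toddser N ^+ N.+1 * ((-1) ^+ #|J| * expser 1 N ^+ (\sum_(i in J) d i)))`_N
    = (-1) ^+ #|J| * powB_coef N (\sum_(i in J) d i).
  by rewrite mulrCA -(rmorph_sign polyC) coefCM -(todd_coefE _ (leqnn N)).
rewrite Todd_CI_expser // prod_1subXn_expand mulr_sumr coef_sum.
rewrite (eq_bigr _ (fun J _ => Eterm J)) sum_powB_coef ?card_ord //.
have S0 : (\sum_i d i != 0)%N.
  by rewrite -lt0n (bigD1 (Ordinal r0)) //= addn_gt0 d0.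
rewrite /powB_coef (negbTE S0) mulrA -exprD.
by rewrite /N addnCA addnn -mul2n exprD exprM sqrrN !expr1n mulr1.
Qed.

Theorem lemma3p3 (n r : nat) (d : 'I_r -> nat) :
  (1 < r)%N ->
  (forall i, (1 < d i)%N) ->
  c1_CI n r d < 0 ->
  (forall j : 'I_r, 0 <= c1_hat n r d j) ->
  ((n + r)%:R : rat) <= (-1) ^+ n * Todd_CI n r d.
Proof.
move=> r1 d1 c1_neg c1_hat_ge0; set S := (\sum_i d i)%N.
have NS : ((n + r).+1 < S)%N by move: c1_neg; rewrite /c1_CI -/S; lia.
have Sd j : (S <= n + r + d j)%N by move: (c1_hat_ge0 j); rewrite /c1_hat -/S; lia.
rewrite Todd_CI_closed_form ?(ltnW r1) // => [|i]; last exact: ltnW (d1 i).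
rewrite mulrDr mulr1 mulrA -expr2 sqrr_sign mul1r.
have Cbound : ((n + r).+1 <= 'C(S.-1, n + r))%N by rewrite -binSn leq_bin2l //; lia.
have sign_ge : -1 <= (-1) ^+ n :> rat by rewrite -signr_odd; case: odd.
move: Cbound; rewrite -(ler_nat rat) -natr1; lra.
Qed.
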